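(* Let $A$ be an algebra over a field $K$, let $A_1$ be a linear subspace with $A=A_1\oplus A_0$, and for a map $T:A\to A$ write $T=T_1+T_0$ where $T_1(A)\subseteq A_1$ and $T_0(A)\subseteq A_0$ (the components of $T$ with respect to this direct sum). Then: (i) $T$ is a weak multiplier if and only if $T_1$ is a weak multiplier; and if $T$ is a weak multiplier, then $T_1$ is $K$-linear and $T_1(A_0)=\{0\}$. (ii) If $T_1$ is a multiplier and $T_0(xy)=0$ for all $x,y\in A$, then $T$ is a multiplier. If moreover $A_1$ is a subalgebra of $A$, the converse holds: if $T$ is a multiplier then $T_1$ is a multiplier and $T_0(xy)=0$ for all $x,y\in A$. (iii) Suppose $A_1$ is a subalgebra of $A$. Let $\pi:A\to A_1$ be the projection along $A_0$ and $\mu:A_1\to A$ the inclusion, and define $\Phi:(A_1)^{A_1}\to A^A$ by $\Phi(R)=\mu\circ R\circ\pi$. Then $\Phi$ restricts to an algebra isomorphism from $M(A_1)$ onto $M_1(A)$, and to a bijective linear map from $M'(A_1)$ onto $M'_1(A)$ preserving the Jordan product $S\circ U=SU+US$ (a Jordan isomorphism).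
   Context: An algebra over $K$ is a $K$-vector space with a bilinear, not necessarily associative multiplication. A map $T:A\to A$ (not assumed linear) is a weak multiplier if $xT(y)=T(x)y$ for all $x,y\in A$, and a multiplier if $xT(y)=T(xy)=T(x)y$ for all $x,y\in A$. $M(B)$, $M'(B)$ denote the sets of multipliers and weak multipliers of an algebra $B$. $A_0=\mathrm{Ann}_l(A)\cap\mathrm{Ann}_r(A)$ with $\mathrm{Ann}_l(A)=\{a: ax=0\ \forall x\}$, $\mathrm{Ann}_r(A)=\{a: xa=0\ \forall x\}$. Given the decomposition $A=A_1\oplus A_0$, $M_1(A)$ (resp. $M'_1(A)$) is the set of multipliers (resp. weak multipliers) $T$ of $A$ with $T(A)\subseteq A_1$. *)

From HB Require Import structures.
From mathcomp Require Import all_boot all_order all_algebra.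
Set Implicit Arguments. Unset Strict Implicit. Unset Printing Implicit Defensive.
Import Order.TTheory GRing.Theory Num.Theory.
Local Open Scope ring_scope.

Definition bilinear_mul (K : fieldType) (V : lmodType K) (mul : V -> V -> V) : Prop :=
  (forall x, linear (mul x)) /\ (forall y, linear (fun x => mul x y)).

Definition Ann_l (V : zmodType) (mul : V -> V -> V) (a : V) : Prop :=
  forall x, mul a x = 0.
Definition Ann_r (V : zmodType) (mul : V -> V -> V) (a : V) : Prop :=
  forall x, mul x a = 0.
Definition in_A0 (V : zmodType) (mul : V -> V -> V) (a : V) : Prop :=
  Ann_l mul a /\ Ann_r mul a.

(* Weak multipliers and multipliers of an algebra (B, m); T need not be linear. *)
Definition is_wmult (B : Type) (m : B -> B -> B) (T : B -> B) : Prop :=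
  forall x y, m x (T y) = m (T x) y.
Definition is_mult (B : Type) (m : B -> B -> B) (T : B -> B) : Prop :=
  forall x y, m x (T y) = T (m x y) /\ T (m x y) = m (T x) y.

From HB Require Import structures.
From mathcomp Require Import all_boot all_order all_algebra.
Import GRing.Theory.
From Stdlib Require Import FunctionalExtensionality.
Set Implicit Arguments. Unset Strict Implicit. Unset Printing Implicit Defensive.
Local Open Scope ring_scope.

(* Everything rests on one observation: adding an element of A_0 to a factor
   does not change a product, and an element of A_1 is determined by the
   products it makes (A_1 meets A_0 in 0).  Hence
   - a map T and its A_1-component T_1 have the same products, which gives
     the weak-multiplier part of (i) and both directions of (ii);
   - a weak multiplier with values in A_1 is linear, kills A_0 and factors
     through the projection pi onto A_1, because in each case the two sides
     lie in A_1 and make the same products;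
   - the projection pi is multiplicative, so Phi R = val o R o pi and its
     inverse T |-> pi o T o val exchange (weak) multipliers of A_1 with
     (weak) multipliers of A with values in A_1; Phi is additive, homogeneous
     and multiplicative on all maps since pi o val = id. *)

Section LinearMap.
Variables (K : fieldType) (U X : lmodType K) (f : U -> X).
Hypothesis f_lin : linear f.

Lemma lin_fun0 : f 0 = 0.
Proof.
have := f_lin 1 0 0; rewrite !scale1r addr0 => f00.
by apply: (addrI (f 0)); rewrite addr0 -{1}f00.
Qed.

Lemma lin_funD u v : f (u + v) = f u + f v.
Proof. by have := f_lin 1 u v; rewrite !scale1r. Qed.

Lemma lin_funZ a u : f (a *: u) = a *: f u.
Proof. by have := f_lin a u 0; rewrite addr0 lin_fun0 addr0. Qed.

Lemma lin_funB u v : f (u - v) = f u - f v.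
Proof. by rewrite lin_funD -scaleN1r lin_funZ scaleN1r. Qed.

End LinearMap.

Lemma mult_wmult (B : Type) (m : B -> B -> B) (T : B -> B) :
  is_mult m T -> is_wmult m T.
Proof. by move=> T_mult x y; have [-> ->] := T_mult x y. Qed.

Section BilinearProduct.
Variables (K : fieldType) (V : lmodType K) (mul : V -> V -> V).
Hypothesis mul_bilin : bilinear_mul mul.

Lemma mulDl u v y : mul (u + v) y = mul u y + mul v y.
Proof. exact: (lin_funD (mul_bilin.2 y)). Qed.

Lemma mulDr x u v : mul x (u + v) = mul x u + mul x v.
Proof. exact: (lin_funD (mul_bilin.1 x)). Qed.

Lemma mulBl u v y : mul (u - v) y = mul u y - mul v y.
Proof. exact: (lin_funB (mul_bilin.2 y)). Qed.

Lemma mulBr x u v : mul x (u - v) = mul x u - mul x v.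
Proof. exact: (lin_funB (mul_bilin.1 x)). Qed.

Lemma mulZl a u y : mul (a *: u) y = a *: mul u y.
Proof. exact: (lin_funZ (mul_bilin.2 y)). Qed.

Lemma mulZr x a u : mul x (a *: u) = a *: mul x u.
Proof. exact: (lin_funZ (mul_bilin.1 x)). Qed.

Lemma mul_addA0l u b y : in_A0 mul b -> mul (u + b) y = mul u y.
Proof. by move=> [b_l _]; rewrite mulDl b_l addr0. Qed.

Lemma mul_addA0r x u b : in_A0 mul b -> mul x (u + b) = mul x u.
Proof. by move=> [_ b_r]; rewrite mulDr b_r addr0. Qed.

Section Components.
Variables T T1 T0 : V -> V.
Hypothesis T_split : forall x, T x = T1 x + T0 x.
Hypothesis T0_A0 : forall x, in_A0 mul (T0 x).

Lemma mul_componentl x y : mul (T x) y = mul (T1 x) y.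
Proof. by rewrite T_split mul_addA0l. Qed.

Lemma mul_componentr x y : mul x (T y) = mul x (T1 y).
Proof. by rewrite T_split mul_addA0r. Qed.

Lemma wmult_component : is_wmult mul T <-> is_wmult mul T1.
Proof.
by split=> wT x y; have := wT x y; rewrite ?mul_componentl ?mul_componentr.
Qed.

Lemma mult_of_component :
  is_mult mul T1 -> (forall x y, T0 (mul x y) = 0) -> is_mult mul T.
Proof.
move=> mT1 T0_mul x y.
by rewrite mul_componentl mul_componentr T_split T0_mul addr0; exact: mT1.
Qed.

End Components.

Section Decomposition.
Variable A1 : {pred V}.
Hypothesis A1_submod : submod_closed A1.
Hypothesis A1_A0_trivial : forall a, a \in A1 -> in_A0 mul a -> a = 0.
Hypothesis A1_A0_span :
  forall x, exists a b, a \in A1 /\ in_A0 mul b /\ x = a + b.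

Lemma A1_subr a c : a \in A1 -> c \in A1 -> a - c \in A1.
Proof.
by move=> Aa Ac; rewrite addrC -scaleN1r; apply: A1_submod.2.
Qed.

Lemma A1_linear a u v : u \in A1 -> v \in A1 -> a *: u + v \in A1.
Proof. exact: A1_submod.2. Qed.

Lemma A1_products_inj a c : a \in A1 -> c \in A1 ->
  (forall x, mul a x = mul c x) -> (forall x, mul x a = mul x c) -> a = c.
Proof.
move=> Aa Ac eql eqr; apply/eqP; rewrite -subr_eq0; apply/eqP.
apply: A1_A0_trivial; first exact: A1_subr.
by split=> x; rewrite ?mulBl ?mulBr (eql, eqr) subrr.
Qed.

Section WeakMultiplierA1.
Variable T : V -> V.
Hypothesis T_wmult : is_wmult mul T.
Hypothesis T_A1 : forall x, T x \in A1.

Lemma wmultA1_linear : linear T.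
Proof.
move=> a u v /=; apply: A1_products_inj.
- exact: T_A1.
- by apply: A1_linear; exact: T_A1.
- by move=> x; rewrite -T_wmult mulDl mulZl mulDl mulZl -!T_wmult.
- by move=> x; rewrite T_wmult mulDr mulZr mulDr mulZr !T_wmult.
Qed.

Lemma wmultA1_A0 : forall x, in_A0 mul x -> T x = 0.
Proof.
move=> x [x_l x_r]; apply: A1_A0_trivial; first exact: T_A1.
by split=> y; [rewrite -T_wmult x_l | rewrite T_wmult x_r].
Qed.

End WeakMultiplierA1.

(* Part (ii), second half: if A_1 is a subalgebra, then x T(y) lies in A_1
   (write x = a + b along A_1 + A_0), so T maps products into A_1 and T_0
   kills them. *)
Lemma mult_component (T T1 T0 : V -> V) :
  (forall x, T x = T1 x + T0 x) -> (forall x, T1 x \in A1) ->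
  (forall x, in_A0 mul (T0 x)) ->
  (forall x y, x \in A1 -> y \in A1 -> mul x y \in A1) ->
  is_mult mul T -> is_mult mul T1 /\ (forall x y, T0 (mul x y) = 0).
Proof.
move=> T_split T1_A1 T0_A0 A1_mul T_mult.
have T0_mul x y : T0 (mul x y) = 0.
  have T_prod : T (mul x y) \in A1.
    rewrite -(T_mult x y).1 (mul_componentr T_split T0_A0).
    have [a [b [Aa [b_A0 ->]]]] := A1_A0_span x.
    by rewrite mul_addA0l //; apply: A1_mul.
  apply: A1_A0_trivial; last exact: T0_A0.
  by rewrite -[T0 _](addKr (T1 (mul x y))) -T_split addrC; apply: A1_subr.
split=> // x y; have := T_mult x y.
rewrite (mul_componentl T_split) // (mul_componentr T_split) //.
by rewrite T_split T0_mul addr0.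
Qed.

(* Part (iii): A_1 as a type W with inclusion val, its product mulW and the
   projection pi : A -> A_1 along A_0. *)
Section Projection.
Variables (W : subLmodType A1) (mulW : W -> W -> W) (pi : V -> W).
Hypothesis mulW_val : forall u v : W, val (mulW u v) = mul (val u) (val v).
Hypothesis pi_A0 : forall x, in_A0 mul (x - val (pi x)).

Lemma mul_projl x y : mul (val (pi x)) y = mul x y.
Proof. by rewrite -(mul_addA0l (val (pi x)) y (pi_A0 x)) addrC subrK. Qed.

Lemma mul_projr x y : mul x (val (pi y)) = mul x y.
Proof. by rewrite -(mul_addA0r x (val (pi y)) (pi_A0 y)) addrC subrK. Qed.

Lemma proj_A1 z : z \in A1 -> val (pi z) = z.
Proof.
move=> Az; apply/eqP; rewrite eq_sym -subr_eq0; apply/eqP.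
by apply: A1_A0_trivial; [apply: A1_subr => //; exact: valP | exact: pi_A0].
Qed.

Lemma proj_val (w : W) : pi (val w) = w.
Proof. by apply: val_inj; apply: proj_A1; exact: valP. Qed.

Lemma proj_mul x y : pi (mul x y) = mulW (pi x) (pi y).
Proof. by rewrite -mul_projl -mul_projr -mulW_val proj_val. Qed.

Lemma wmultA1_proj (T : V -> V) : is_wmult mul T -> (forall x, T x \in A1) ->
  forall x, T (val (pi x)) = T x.
Proof.
move=> T_wmult T_A1 x; apply: A1_products_inj; rewrite ?T_A1 // => y.
  by rewrite -!T_wmult mul_projl.
by rewrite !T_wmult mul_projr.
Qed.

Definition Phi (R : W -> W) : V -> V := fun x => val (R (pi x)).
Definition Psi (T : V -> V) : W -> W := fun w => pi (T (val w)).

Lemma Phi_A1 R x : Phi R x \in A1.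
Proof. exact: valP. Qed.

Lemma Phi_wmult R : is_wmult mulW R -> is_wmult mul (Phi R).
Proof.
move=> R_wmult x y; rewrite /Phi -mul_projl -[in RHS]mul_projr.
by rewrite -!mulW_val R_wmult.
Qed.

Lemma Phi_mult R : is_mult mulW R -> is_mult mul (Phi R).
Proof.
move=> R_mult x y.
rewrite /Phi proj_mul -[mul x _]mul_projl -[mul _ y]mul_projr.
by rewrite -!mulW_val; have [-> ->] := R_mult (pi x) (pi y).
Qed.

Lemma Psi_wmult T : is_wmult mul T -> (forall x, T x \in A1) ->
  is_wmult mulW (Psi T).
Proof.
by move=> T_wmult T_A1 u v; apply: val_inj; rewrite !mulW_val /Psi !proj_A1.
Qed.

Lemma Psi_mult T : is_mult mul T -> (forall x, T x \in A1) ->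
  is_mult mulW (Psi T).
Proof.
move=> T_mult T_A1 u v; have [Tl Tr] := T_mult (val u) (val v).
by split; apply: val_inj; rewrite /Psi !mulW_val !proj_A1 ?T_A1.
Qed.

Lemma Phi_Psi T : is_wmult mul T -> (forall x, T x \in A1) -> Phi (Psi T) = T.
Proof.
move=> T_wmult T_A1; apply: functional_extensionality => x.
by rewrite /Phi /Psi proj_A1 // wmultA1_proj.
Qed.

Lemma Phi_inj R S : Phi R = Phi S -> R = S.
Proof.
move=> eqRS; apply: functional_extensionality => w; apply: val_inj.
by have := congr1 (fun F => F (val w)) eqRS; rewrite /Phi /= proj_val.
Qed.

Lemma PhiD R S : Phi (fun w => R w + S w) = (fun x => Phi R x + Phi S x).
Proof. by apply: functional_extensionality => x; rewrite /Phi raddfD. Qed.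

Lemma PhiZ a R : Phi (fun w => a *: R w) = (fun x => a *: Phi R x).
Proof. by apply: functional_extensionality => x; rewrite /Phi linearZ. Qed.

(* Phi is multiplicative for composition because pi o val = id. *)
Lemma Phi_comp R S : Phi (fun w => R (S w)) = (fun x => Phi R (Phi S x)).
Proof. by apply: functional_extensionality => x; rewrite /Phi proj_val. Qed.

Lemma Phi_jordan R S : Phi (fun w => R (S w) + S (R w)) =
  (fun x => Phi R (Phi S x) + Phi S (Phi R x)).
Proof.
rewrite (PhiD (fun w => R (S w)) (fun w => S (R w))).
by rewrite (Phi_comp R S) (Phi_comp S R).
Qed.

End Projection.

End Decomposition.
End BilinearProduct.

Theorem theorem3p1 (K : fieldType) (V : lmodType K) (mul : V -> V -> V)
  (Hmul : bilinear_mul mul) (A1 : {pred V})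
  (HA1 : submod_closed A1)
  (Hspan : forall x : V, exists a b : V, a \in A1 /\ in_A0 mul b /\ x = a + b)
  (Hcap : forall a : V, a \in A1 -> in_A0 mul a -> a = 0) :
  (* (i) *)
  (forall T T1 T0 : V -> V,
     (forall x, T x = T1 x + T0 x) -> (forall x, T1 x \in A1) ->
     (forall x, in_A0 mul (T0 x)) ->
     (is_wmult mul T <-> is_wmult mul T1) /\
     (is_wmult mul T -> linear T1 /\ (forall x, in_A0 mul x -> T1 x = 0)))
  /\
  (* (ii) *)
  (forall T T1 T0 : V -> V,
     (forall x, T x = T1 x + T0 x) -> (forall x, T1 x \in A1) ->
     (forall x, in_A0 mul (T0 x)) ->
     (is_mult mul T1 -> (forall x y, T0 (mul x y) = 0) -> is_mult mul T) /\
     ((forall x y, x \in A1 -> y \in A1 -> mul x y \in A1) ->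
        is_mult mul T -> is_mult mul T1 /\ (forall x y, T0 (mul x y) = 0)))
  /\
  (* (iii) : W is the subspace A1 as a type (with inclusion mu = val),
     mulW is the multiplication of the subalgebra A1, pi the projection
     along A0, and Phi R = val \o R \o pi. *)
  (forall (W : subLmodType A1) (mulW : W -> W -> W) (pi : V -> W),
     (forall u v : W, val (mulW u v) = mul (val u) (val v)) ->
     (forall x, in_A0 mul (x - val (pi x))) ->
     let Phi := fun (R : W -> W) (x : V) => val (R (pi x)) in
     (* Phi : M(A1) -> M_1(A) is an algebra isomorphism *)
     ((forall R, is_mult mulW R ->
         is_mult mul (Phi R) /\ (forall x, Phi R x \in A1)) /\
      (forall T, is_mult mul T -> (forall x, T x \in A1) ->
         exists R, is_mult mulW R /\ Phi R = T) /\
      (forall R S, is_mult mulW R -> is_mult mulW S -> Phi R = Phi S -> R = S) /\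
      (forall R S, is_mult mulW R -> is_mult mulW S ->
         Phi (fun w => R w + S w) = (fun x => Phi R x + Phi S x)) /\
      (forall (a : K) R, is_mult mulW R ->
         Phi (fun w => a *: R w) = (fun x => a *: Phi R x)) /\
      (forall R S, is_mult mulW R -> is_mult mulW S ->
         Phi (fun w => R (S w)) = (fun x => Phi R (Phi S x))))
     /\
     (* Phi : M'(A1) -> M'_1(A) is a linear bijection preserving the
        Jordan product S o U = SU + US *)
     ((forall R, is_wmult mulW R ->
         is_wmult mul (Phi R) /\ (forall x, Phi R x \in A1)) /\
      (forall T, is_wmult mul T -> (forall x, T x \in A1) ->
         exists R, is_wmult mulW R /\ Phi R = T) /\
      (forall R S, is_wmult mulW R -> is_wmult mulW S -> Phi R = Phi S -> R = S) /\
      (forall R S, is_wmult mulW R -> is_wmult mulW S ->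
         Phi (fun w => R w + S w) = (fun x => Phi R x + Phi S x)) /\
      (forall (a : K) R, is_wmult mulW R ->
         Phi (fun w => a *: R w) = (fun x => a *: Phi R x)) /\
      (forall R S, is_wmult mulW R -> is_wmult mulW S ->
         Phi (fun w => R (S w) + S (R w)) =
         (fun x => Phi R (Phi S x) + Phi S (Phi R x))))).

Proof.
split.
  move=> T T1 T0 T_split T1_A1 T0_A0.
  have T_T1 := wmult_component Hmul T_split T0_A0.
  split=> // /T_T1 T1_wmult.
  by split; [exact: (wmultA1_linear Hmul HA1 Hcap) | exact: (wmultA1_A0 Hcap)].
split.
  move=> T T1 T0 T_split T1_A1 T0_A0; split.
    exact: (mult_of_component Hmul T_split T0_A0).
  exact: (mult_component Hmul HA1 Hcap Hspan T_split T1_A1 T0_A0).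
move=> W mulW pi mulW_val pi_A0 PhiA.
split; (split; [|split; [|split; [|split; [|split]]]]).
- move=> R R_mult; split; last exact: Phi_A1.
  exact: (Phi_mult Hmul HA1 Hcap mulW_val pi_A0).
- move=> T T_mult T_A1; exists (Psi pi T); split.
    exact: (Psi_mult HA1 Hcap mulW_val pi_A0).
  by apply: (Phi_Psi Hmul HA1 Hcap pi_A0) => //; exact: mult_wmult.
- by move=> R S _ _; exact: (Phi_inj HA1 Hcap pi_A0).
- by move=> R S _ _; exact: PhiD.
- by move=> a R _; exact: PhiZ.
- by move=> R S _ _; exact: (Phi_comp HA1 Hcap pi_A0 R S).
- move=> R R_wmult; split; last exact: Phi_A1.
  exact: (Phi_wmult Hmul mulW_val pi_A0).
- move=> T T_wmult T_A1; exists (Psi pi T); split.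
    exact: (Psi_wmult HA1 Hcap mulW_val pi_A0).
  exact: (Phi_Psi Hmul HA1 Hcap pi_A0).
- by move=> R S _ _; exact: (Phi_inj HA1 Hcap pi_A0).
- by move=> R S _ _; exact: PhiD.
- by move=> a R _; exact: PhiZ.
- by move=> R S _ _; exact: (Phi_jordan HA1 Hcap pi_A0 R S).
Qed.
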